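(* Let $V^1$ and $V^2$ be $\mathbb{Q}$-VASRs of dimensions $d$ and $e$ respectively, and let $T\in\mathbb{Q}^{e\times d}$ be a matrix such that $V^1\Vdash_T V^2$. Then $T$ is coherent with respect to $V^1$.
   Context: A $\mathbb{Q}$-VASR of dimension $d$ is a finite set $V\subseteq\{0,1\}^d\times\mathbb{Q}^d$ of transformers $(\vec r,\vec a)$ (reset vector $\vec r$, addition vector $\vec a$); it defines the transition system on $\mathbb{Q}^d$ with $\vec u\to_V\vec v$ iff $\vec v=\vec r*\vec u+\vec a$ for some $(\vec r,\vec a)\in V$, where $*$ is the pointwise product. $V^1\Vdash_TV^2$ means $T$ is a linear simulation: for all $\vec u,\vec v\in\mathbb{Q}^d$ with $\vec u\to_{V^1}\vec v$ we have $T\vec u\to_{V^2}T\vec v$. Dimensions $i,j\in\{1,\dots,d\}$ are coherent dimensions of $V$ if $r_i=r_j$ for every $(\vec r,\vec a)\in V$; this is an equivalence relation whose classes are the coherence classes of $V$. A matrix $T\in\mathbb{Q}^{e\times d}$ is coherent with respect to $V$ iff each of its rows has nonzero entries only in columns belonging to a single coherence class of $V$. *)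

From mathcomp Require Import all_boot all_order all_algebra.
Set Implicit Arguments. Unset Strict Implicit. Unset Printing Implicit Defensive.
Import GRing.Theory Num.Theory.
Local Open Scope ring_scope.

(* A transformer of dimension d: reset vector r in {0,1}^d (as booleans,
   true = 1, false = 0) and addition vector a in Q^d (column vectors). *)
Definition transformer (d : nat) : Type := ('cV[bool]_d * 'cV[rat]_d)%type.

Definition QVASR (d : nat) : Type := seq (transformer d).

Definition rmul (d : nat) (r : 'cV[bool]_d) (u : 'cV[rat]_d) : 'cV[rat]_d :=
  \col_i ((r i 0 : nat)%:R * u i 0).

Definition step (d : nat) (V : QVASR d) (u v : 'cV[rat]_d) : Prop :=
  exists2 t, t \in V & v = rmul t.1 u + t.2.

Definition simulates (d e : nat) (V1 : QVASR d) (T : 'M[rat]_(e, d))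
    (V2 : QVASR e) : Prop :=
  forall u v : 'cV[rat]_d, step V1 u v -> step V2 (T *m u) (T *m v).

Definition coherent_dims (d : nat) (V : QVASR d) (i j : 'I_d) : Prop :=
  forall t, t \in V -> t.1 i 0 = t.1 j 0.

(* T is coherent w.r.t. V: the nonzero entries of each row lie in columns of
   a single coherence class, i.e. any two such columns are coherent. *)
Definition coherent_mx (d e : nat) (V : QVASR d) (T : 'M[rat]_(e, d)) : Prop :=
  forall (k : 'I_e) (j1 j2 : 'I_d),
    T k j1 != 0 -> T k j2 != 0 -> coherent_dims V j1 j2.

(* If some transformer keeps dimension j1 but resets j2, while row k of T has
   nonzero entries in both columns, pick u on the line spanned by e_j1, e_j2 with
   (T u)_k = 2M. Resetting halves this coordinate of T u up to a bounded offset,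
   whereas every transformer of V2 either keeps it or resets it, again up to a
   bounded offset; for M large neither is possible. *)

From mathcomp Require Import all_boot all_order all_algebra.
From mathcomp Require Import lra.
Set Implicit Arguments. Unset Strict Implicit. Unset Printing Implicit Defensive.
Import Order.TTheory GRing.Theory Num.Theory.
Local Open Scope ring_scope.

Lemma rmulD (d : nat) (r : 'cV[bool]_d) (u w : 'cV[rat]_d) :
  rmul r (u + w) = rmul r u + rmul r w.
Proof. by apply/matrixP => i l; rewrite !mxE mulrDr. Qed.

Lemma rmul_delta (d : nat) (r : 'cV[bool]_d) (i : 'I_d) (x : rat) :
  rmul r (x *: delta_mx i 0) = if r i 0 then x *: delta_mx i 0 else 0.
Proof.
by case ri: (r i 0); apply/matrixP => i' l; rewrite (ord1 l) !mxE eqxx andbT;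
  have [->|_] := eqVneq i' i; rewrite ?ri ?mul1r ?mul0r ?mulr0.
Qed.

Lemma ler_sum_norm (R : numDomainType) (X : eqType) (s : seq X) (f : X -> R) (x : X) :
  x \in s -> `|f x| <= \sum_(y <- s) `|f y|.
Proof.
elim: s => [//|z s IHs]; rewrite in_cons big_cons => /orP [/eqP ->|/IHs le_x].
  by rewrite lerDl sumr_ge0.
by apply: le_trans le_x _; rewrite lerDr.
Qed.

Definition addition_bound (e : nat) (V : QVASR e) (k : 'I_e) : rat :=
  \sum_(t <- V) `|t.2 k 0|.

Lemma step_coord (e : nat) (V : QVASR e) (k : 'I_e) (u v : 'cV[rat]_e) :
  step V u v ->
  exists b : bool, exists2 a, `|a| <= addition_bound V k & v k 0 = b%:R * u k 0 + a.
Proof.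
case=> t tV ->; exists (t.1 k 0), (t.2 k 0).
  exact: (ler_sum_norm (fun t : transformer e => t.2 k 0)).
by rewrite !mxE.
Qed.

Lemma neq_halved_coord (R : realFieldType) (M c a B : R) (b : bool) :
  `|c| + B < M -> `|a| <= B -> M + c != b%:R * (M + M) + a.
Proof.
move=> ltM le_a; apply/eqP => eqM.
have := ler_norm c; have := ler_norm (- c); have := ler_norm a; have := ler_norm (- a).
by rewrite !normrN; case: b eqM => /=; lra.
Qed.

Lemma simulates_keep_coord (d e : nat) (V1 : QVASR d) (V2 : QVASR e)
    (T : 'M[rat]_(e, d)) (k : 'I_e) (j1 j2 : 'I_d) (t : transformer d) :
  simulates V1 T V2 -> T k j1 != 0 -> T k j2 != 0 -> t \in V1 ->
  t.1 j1 0 -> t.1 j2 0.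
Proof.
move=> simT Tj1 Tj2 tV1 keep1; apply/negPn/negP => reset2.
set c := (T *m t.2) k 0.
set M := `|c| + addition_bound V2 k + 1.
set u1 : 'cV[rat]_d := (M / T k j1) *: delta_mx j1 0.
set u2 : 'cV[rat]_d := (M / T k j2) *: delta_mx j2 0.
have Tu_coord (j : 'I_d) : T k j != 0 ->
    (T *m ((M / T k j) *: delta_mx j 0 : 'cV[rat]_d)) k 0 = M.
  by move=> Tj; rewrite -scalemxAr -colE !mxE mulfVK.
have rmul_u : rmul t.1 (u1 + u2) = u1.
  by rewrite rmulD !rmul_delta keep1 (negbTE reset2) addr0.
have [b [a le_a]] := step_coord k (simT (u1 + u2) _ (ex_intro2 _ _ t tV1 erefl)).
rewrite rmul_u !mulmxDr 2![((_ + _)%R : 'cV_e) k 0]mxE -/c /u1 /u2 !Tu_coord //.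
have ltM : `|c| + addition_bound V2 k < M by rewrite /M ltrDl.
by move/eqP; rewrite (negbTE (neq_halved_coord b ltM le_a)).
Qed.

Theorem lemma1 (d e : nat) (V1 : QVASR d) (V2 : QVASR e) (T : 'M[rat]_(e, d)) :
  simulates V1 T V2 -> coherent_mx V1 T.
Proof.
move=> simT k j1 j2 Tj1 Tj2 t tV1.
by apply/idP/idP; [exact: simulates_keep_coord simT Tj1 Tj2 tV1
                  | exact: simulates_keep_coord simT Tj2 Tj1 tV1].
Qed.
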